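(* Let $d\ge2$ be an integer and $p$ a prime with $p\equiv 3\pmod 4$. Let $\alpha_n=\frac{(1/2)_n}{n!}$, where $(x)_n=x(x+1)\cdots(x+n-1)$, let $F_p(z)=\sum_{n=0}^{p-1}\alpha_n^d z^n$ and $\epsilon_p=(-1)^{d(p-1)/2}$. Then $$F_p(-\epsilon_p)\equiv 0\pmod{p}.$$
   Context: Congruences are in the ring $\mathbb{Z}_{(p)}$ of $p$-integral rationals. *)

From mathcomp Require Import all_boot all_order all_algebra.
Set Implicit Arguments. Unset Strict Implicit. Unset Printing Implicit Defensive.
Import Order.TTheory GRing.Theory Num.Theory.
Local Open Scope ring_scope.

Definition pochhammer (x : rat) (n : nat) : rat := \prod_(i < n) (x + i%:R).

Definition alpha (n : nat) : rat := pochhammer (1 / 2%:R) n / (n`!)%:R.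

Definition Fp (d p : nat) (z : rat) : rat := \sum_(n < p) alpha n ^+ d * z ^+ n.

Definition eps (d p : nat) : rat := (-1) ^+ (d * (p.-1) %/ 2).

(* r = 0 mod p in Z_(p): r is p-integral (p does not divide the reduced
   denominator) and p divides its reduced numerator. *)
Definition pcong0 (p : nat) (r : rat) : Prop :=
  ~~ (p%:Z %| denq r)%Z /\ (p%:Z %| numq r)%Z.

From mathcomp Require Import all_boot all_order all_algebra.
From mathcomp Require Import zify ring.
Set Implicit Arguments. Unset Strict Implicit. Unset Printing Implicit Defensive.
Import GRing.Theory Num.Theory.
Local Open Scope ring_scope.

(* Since alpha_n = C(2n, n) / 4^n, all denominators in F_p are powers of 4.
   Modulo p = 2m + 1 we have 2n + 1 = -2 (m - n), whence C(2n, n) = (-4)^n C(m, n),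
   and the sign (-1)^(dn) produced by (-4)^(nd) combines with (-eps_p)^n into
   (-1)^n because m = (p - 1)/2 is odd.  So 4^((p-1)d) F_p(-eps_p) is congruent
   to 4^((p-1)d) sum_(n <= m) (-1)^n C(m, n)^d, which vanishes: for odd m the
   symmetry n |-> m - n reverses the sign of each term. *)

Lemma pcong0_mul p (r : rat) (a b : int) : prime p ->
  r * b%:~R = a%:~R -> ~~ (p%:Z %| b)%Z -> (p%:Z %| a)%Z -> pcong0 p r.
Proof.
move=> p_pr rb_a p_ndvd_b p_dvd_a.
have num_den : numq r * b = a * denq r.
  apply: (@intr_inj rat); rewrite !rmorphM /= -rb_a.
  have den_neq0 : (denq r)%:~R != 0 :> rat by rewrite intr_eq0 denq_neq0.
  by rewrite -[X in X * _ * _](divq_num_den r); field.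
have cop : coprimez (denq r) (numq r) by rewrite /coprimez gcdzC; apply: coprime_num_den.
have den_dvd_b : (denq r %| b)%Z by rewrite -(Gauss_dvdzr _ cop) num_den dvdz_mull.
split; first by apply: contra p_ndvd_b => /dvdz_trans; apply.
have : (p%:Z %| numq r * b)%Z by rewrite num_den dvdz_mulr.
rewrite !dvdzE abszM Euclid_dvdM //; case/orP => //.
by move: p_ndvd_b; rewrite dvdzE => /negPf ->.
Qed.

Lemma prime_dvdn_fact p n : prime p -> (p %| n`!)%N = (p <= n)%N.
Proof.
move=> p_pr; apply/idP/idP; last by move=> le_pn; rewrite dvdn_fact ?prime_gt0.
elim: n => [|n IHn]; first by rewrite dvdn1 => /eqP p1; rewrite p1 in p_pr.
rewrite factS Euclid_dvdM // => /orP[/dvdn_leq -> // | /IHn]; exact: leqW.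
Qed.

Lemma pochhammer_half_fact n :
  pochhammer (1 / 2%:R) n * (4%:R ^+ n * (n`!)%:R) = ((n.*2)`!)%:R.
Proof.
elim: n => [|n IHn]; first by rewrite /pochhammer big_ord0 mul1r.
rewrite /pochhammer big_ord_recr /= -/(pochhammer _ _) doubleS !factS !natrM.
by rewrite -IHn -!natr1 -muln2 natrM exprS; field.
Qed.

Lemma alpha_central_binomial n : alpha n = ('C(n.*2, n))%:R / 4%:R ^+ n.
Proof.
have fact_neq0 : (n`!)%:R != 0 :> rat by rewrite pnatr_eq0 -lt0n fact_gt0.
have := bin_fact (leq_addr n n); rewrite addnK addnn => binE.
apply/eqP; rewrite /alpha eqr_div ?expf_neq0 //; apply/eqP; apply: (mulIf fact_neq0).
by rewrite -mulrA pochhammer_half_fact -binE !natrM mulrA.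
Qed.

Lemma fact_double_half (R : comPzRingType) m n : (m.*2.+1)%:R = 0 :> R ->
  ((n.*2)`!)%:R = (-4) ^+ n * (m ^_ n * n`!)%:R :> R.
Proof.
move=> half_m.
have two_n k : (k.*2.+1)%:R = -2 * (m%:R - k%:R) :> R.
  by rewrite -[LHS]subr0 -half_m -!natr1 -!muln2 !natrM; ring.
elim: n => [|n IHn]; first by rewrite expr0 mul1r.
rewrite doubleS !factS ffactnSr !natrM IHn two_n -doubleS -muln2 natrM.
case: (leqP n m) => [le_nm | lt_mn]; last first.
  by rewrite ffact_small // mul0n !(mul0r, mulr0).
by rewrite natrB // natrM exprS; ring.
Qed.

Lemma central_binomial_half (R : idomainType) m n :
  (m.*2.+1)%:R = 0 :> R -> (n`!)%:R != 0 :> R ->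
  ('C(n.*2, n))%:R = (-4) ^+ n * ('C(m, n))%:R :> R.
Proof.
move=> half_m fact_neq0; apply: (mulIf fact_neq0); apply: (mulIf fact_neq0).
have := bin_fact (leq_addr n n); rewrite addnK addnn => binE.
by rewrite -!mulrA -!natrM binE (fact_double_half n half_m) -bin_ffact !natrM !mulrA.
Qed.

Lemma alternating_binomial_pow_sum m d :
  odd m -> \sum_(i < m.+1) (-1) ^+ i * ('C(m, i))%:R ^+ d = 0 :> int.
Proof.
move=> m_odd; set S := \sum_(i < m.+1) _.
suff : S = - S by lia.
rewrite {1}/S (reindex_inj rev_ord_inj) /= -sumrN; apply: eq_bigr => i _.
have le_im : (i <= m)%N by rewrite -ltnS.
rewrite subSS bin_sub // -signr_odd oddB // m_odd -[(-1) ^+ i]signr_odd.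
by case: (odd i); rewrite ?expr0 ?expr1 ?mulN1r ?mul1r ?opprK.
Qed.

Lemma alternating_binomial_pow_sum_widen (R : pzRingType) m d n :
  odd m -> (0 < d)%N -> (m < n)%N ->
  \sum_(i < n) (-1) ^+ i * ('C(m, i))%:R ^+ d = 0 :> R.
Proof.
move=> m_odd d_gt0 lt_mn.
rewrite (bigID (fun i : 'I_n => (i < m.+1)%N)) /= [X in _ + X]big1 ?addr0; last first.
  move=> i; rewrite -leqNgt => lt_mi.
  by rewrite bin_small // mulr0n expr0n eqn0Ngt d_gt0 mulr0.
rewrite -(big_ord_widen _ (fun i => (-1) ^+ i * ('C(m, i))%:R ^+ d) lt_mn).
have := congr1 (intr : int -> R) (alternating_binomial_pow_sum d m_odd).
rewrite rmorph0 rmorph_sum => sum0; rewrite -[RHS]sum0.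
by apply: eq_bigr => i _; rewrite rmorphM !rmorphXn rmorphN1 rmorph_nat.
Qed.

Lemma sign_odd_mul (R : pzRingType) m d : odd m -> (-1) ^+ d * - (-1) ^+ (d * m) = -1 :> R.
Proof. by move=> m_odd; rewrite mulrN -exprD -signr_odd oddD oddM m_odd andbT addbb. Qed.

(* 4^((p-1)d) F_p(-eps_p), with integer coefficients so that it can be read in any ring. *)
Definition Fp_cleared (R : pzRingType) (d p : nat) : R :=
  \sum_(n < p) ('C(n.*2, n))%:R ^+ d * (- (-1) ^+ (d * p.-1 %/ 2)) ^+ n
    * 4%:R ^+ ((p.-1 - n) * d).

Lemma rmorph_Fp_cleared (R S : pzRingType) (f : {rmorphism R -> S}) d p :
  f (Fp_cleared R d p) = Fp_cleared S d p.
Proof.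
rewrite rmorph_sum; apply: eq_bigr => n _.
by rewrite !rmorphM !rmorphXn rmorphN rmorphXn rmorphN1 !rmorph_nat.
Qed.

Lemma Fp_clearedE d p : Fp d p (- eps d p) * 4%:R ^+ (p.-1 * d) = Fp_cleared rat d p.
Proof.
rewrite mulr_suml; apply: eq_bigr => n _.
have split_exp : (p.-1 * d = n * d + (p.-1 - n) * d)%N.
  by rewrite -mulnDl subnKC //; have := ltn_ord n; lia.
rewrite alpha_central_binomial split_exp exprD expr_div_n -exprM.
by field; rewrite expf_neq0.
Qed.

Lemma Fp_cleared_pchar (R : idomainType) d p m :
  p \in [pchar R] -> p = m.*2.+1 -> odd m -> (0 < d)%N -> Fp_cleared R d p = 0.
Proof.
move=> pcharRp p_def m_odd d_gt0.
have p_pr := pcharf_prime pcharRp.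
have half_m : (m.*2.+1)%:R = 0 :> R by rewrite -p_def pcharf0.
have eps_exp : (d * p.-1 %/ 2 = d * m)%N by rewrite p_def /= -muln2 mulnA mulnK.
rewrite /Fp_cleared eps_exp.
transitivity (4%:R ^+ (p.-1 * d) * \sum_(n < p) (-1) ^+ n * ('C(m, n))%:R ^+ d : R).
  rewrite mulr_sumr; apply: eq_bigr => n _.
  have fact_neq0 : (n`!)%:R != 0 :> R.
    by rewrite -(dvdn_pcharf pcharRp) prime_dvdn_fact // -ltnNge.
  have split_exp : (p.-1 * d = n * d + (p.-1 - n) * d)%N.
    by rewrite -mulnDl subnKC //; have := ltn_ord n; lia.
  have sign_n : (-1) ^+ n = ((-1) ^+ d * - (-1) ^+ (d * m)) ^+ n :> R.
    by rewrite sign_odd_mul.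
  have minus_four : -4 = -1 * 4 :> R by rewrite mulN1r.
  rewrite (central_binomial_half half_m fact_neq0) sign_n split_exp exprD.
  by rewrite minus_four !exprMn [((-1) ^+ n) ^+ d]exprAC -!exprM; ring.
have lt_mp : (m < p)%N by rewrite p_def ltnS -addnn leq_addr.
by rewrite (alternating_binomial_pow_sum_widen R m_odd d_gt0 lt_mp) mulr0.
Qed.

Theorem corollary2p4 (d p : nat) :
  (2 <= d)%N -> prime p -> (p %% 4 = 3)%N ->
  pcong0 p (Fp d p (- eps d p)).
Proof.
move=> d_ge2 p_pr p_mod4.
set m := (p %/ 4).*2.+1.
have p_def : p = m.*2.+1 by rewrite {1}(divn_eq p 4) p_mod4 /m; lia.
have m_odd : odd m by rewrite /m /= odd_double.
have d_gt0 : (0 < d)%N by apply: leq_trans d_ge2.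
apply: (@pcong0_mul p _ (Fp_cleared int d p) (4 ^ (p.-1 * d))%:Z p_pr).
- by rewrite rmorph_Fp_cleared -Fp_clearedE -pmulrn natrX.
- rewrite dvdzE /= Euclid_dvdX //; apply/negP => /andP[p_dvd4 _].
  have p3 : p = 3%N by have := dvdn_leq (isT : 0 < 4)%N p_dvd4; lia.
  by rewrite p3 in p_dvd4.
- rewrite (dvdz_pcharf (pchar_Fp p_pr)) rmorph_Fp_cleared.
  by rewrite (Fp_cleared_pchar (pchar_Fp p_pr) p_def m_odd d_gt0).
Qed.
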